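(* Let $\gamma,\alpha,\beta$ be real constants and $\phi\in[0,1]$. Let $X$ be a random variable with values in $\mathbb{N}=\{0,1,2,\dots\}$ whose probability generating function satisfies $$g_X(s)=E[s^X]=h\big(\alpha+\beta(1-\phi s)^\gamma\big),\qquad s\in[0,1],$$ where $h$ is a real function analytic in a neighbourhood of $\alpha+\beta$. Then for every $k\in\mathbb{N}$, $$P(X=k)=(-\phi)^k\sum_{m=0}^k\frac{(-\beta)^m}{m!}\,h^{(m)}(\alpha+\beta)\,C_{\gamma,m}(k),$$ where $h^{(m)}$ denotes the $m$-th derivative of $h$ and $$C_{\gamma,m}(k)=\sum_{j=0}^m(-1)^j\binom{m}{j}\binom{\gamma j}{k}.$$
   Context: For real $x$ and $k\in\mathbb{N}$, $\binom{x}{k}=x(x-1)\cdots(x-k+1)/k!$ (with $\binom{x}{0}=1$). *)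

From Stdlib Require Import Reals Arith.
Open Scope R_scope.

Fixpoint gbinom (x : R) (k : nat) : R :=
  match k with
  | O => 1
  | S k' => gbinom x k' * (x - INR k') / INR (S k')
  end.

Definition Ccoef (gamma : R) (m k : nat) : R :=
  sum_f_R0 (fun j => (-1) ^ j * C m j * gbinom (gamma * INR j) k) m.

Definition analytic_at (h : R -> R) (c : R) : Prop :=
  exists r : R, 0 < r /\ exists a : nat -> R,
    forall x : R, Rabs (x - c) < r ->
      infinite_sum (fun n => a n * (x - c) ^ n) (h x).

Definition iter_derivs (h : R -> R) (hd : nat -> R -> R) (c : R) : Prop :=
  exists r : R, 0 < r /\
    forall x : R, Rabs (x - c) < r ->
      hd 0%nat x = h x /\
      forall m : nat, derivable_pt_lim (hd m) x (hd (S m) x).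

Definition is_pmf (p : nat -> R) : Prop :=
  (forall k, 0 <= p k) /\ infinite_sum p 1.

From Stdlib Require Import Reals Arith Lra Lia.
Open Scope R_scope.

(** Both sides of the identity are read off from expansions of the generating
    function at [s = 0+] modulo [O(s^(k+1))].  On one side the power series
    [sum p_i s^i] agrees with its partial sum up to [s^(k+1)], because the
    probabilities sum to one.  On the other side put [w(s) = (1 - phi s)^gamma - 1],
    which is [O(s)]: Taylor's formula for [h] at [alpha + beta] to order [k],
    composed with [beta w(s)], gives [sum_(m<=k) h^(m)/m! (beta w(s))^m]; the
    binomial theorem writes [(beta w)^m] as [(-beta)^m sum_j (-1)^j C(m,j)
    (1 - phi s)^(gamma j)], and the binomial series expands each of these powers.
    The two polynomials of degree [k] differ by [O(s^(k+1))], hence coincide. *)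

Lemma sum_f_R0_swap (f : nat -> nat -> R) (n1 n2 : nat) :
  sum_f_R0 (fun m => sum_f_R0 (fun i => f m i) n2) n1 =
  sum_f_R0 (fun i => sum_f_R0 (fun m => f m i) n1) n2.
Proof.
  induction n1 as [|n1 IH]; [reflexivity|].
  rewrite tech5, IH, <- sum_plus. reflexivity.
Qed.

Lemma sum_f_R0_mul_sum (a : nat -> R) (b : nat -> nat -> R) (n1 n2 : nat) :
  sum_f_R0 (fun m => a m * sum_f_R0 (fun i => b m i) n2) n1 =
  sum_f_R0 (fun i => sum_f_R0 (fun m => a m * b m i) n1) n2.
Proof.
  rewrite <- sum_f_R0_swap. apply sum_eq; intros m _.
  rewrite scal_sum. apply sum_eq; intros i _. ring.
Qed.

Lemma pow_le_pow_le1 (s : R) (m n : nat) :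
  0 <= s <= 1 -> (n <= m)%nat -> s ^ m <= s ^ n.
Proof.
  intros Hs Hnm. replace m with (n + (m - n))%nat by lia. rewrite pow_add.
  assert (s ^ (m - n) <= 1) by (rewrite <- (pow1 (m - n)); apply pow_incr; lra).
  pose proof (pow_le s n ltac:(lra)). nra.
Qed.

Definition bigO_0plus (f : R -> R) (n : nat) : Prop :=
  exists M e, 0 < e /\ forall s, 0 < s < e -> Rabs (f s) <= M * s ^ n.

Lemma bigO_0plus_ext (f g : R -> R) (n : nat) :
  (forall s, 0 < s < 1 -> f s = g s) -> bigO_0plus f n -> bigO_0plus g n.
Proof.
  intros Efg [M [e [He Hf]]]. exists M, (Rmin e 1). split; [apply Rmin_pos; lra|].
  intros s Hs. pose proof (Rmin_l e 1). pose proof (Rmin_r e 1).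
  rewrite <- Efg by lra. apply Hf. lra.
Qed.

Lemma bigO_0plus_add (f g : R -> R) (n : nat) :
  bigO_0plus f n -> bigO_0plus g n -> bigO_0plus (fun s => f s + g s) n.
Proof.
  intros [M1 [e1 [He1 H1]]] [M2 [e2 [He2 H2]]]. exists (M1 + M2), (Rmin e1 e2).
  split; [apply Rmin_pos; auto|]. intros s Hs.
  pose proof (Rmin_l e1 e2). pose proof (Rmin_r e1 e2).
  specialize (H1 s ltac:(lra)). specialize (H2 s ltac:(lra)).
  pose proof (Rabs_triang (f s) (g s)). nra.
Qed.

Lemma bigO_0plus_scal (c : R) (f : R -> R) (n : nat) :
  bigO_0plus f n -> bigO_0plus (fun s => c * f s) n.
Proof.
  intros [M [e [He Hf]]]. exists (Rabs c * M), e. split; auto. intros s Hs.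
  rewrite Rabs_mult, Rmult_assoc. apply Rmult_le_compat_l; [apply Rabs_pos | auto].
Qed.

Lemma bigO_0plus_sum (F : nat -> R -> R) (N n : nat) :
  (forall m, (m <= n)%nat -> bigO_0plus (F m) N) ->
  bigO_0plus (fun s => sum_f_R0 (fun m => F m s) n) N.
Proof.
  induction n as [|n IH]; intros HF; [apply HF; lia|].
  apply (bigO_0plus_add (fun s => sum_f_R0 (fun m => F m s) n)); auto.
Qed.

Lemma bigO_0plus_lincomb (a : nat -> R) (f g : nat -> R -> R) (N n : nat) :
  (forall m, (m <= n)%nat -> bigO_0plus (fun s => f m s - g m s) N) ->
  bigO_0plus (fun s => sum_f_R0 (fun m => a m * f m s) n -
                       sum_f_R0 (fun m => a m * g m s) n) N.
Proof.
  intros Hfg.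
  apply (bigO_0plus_ext (fun s => sum_f_R0 (fun m => a m * (f m s - g m s)) n)).
  - intros s _. rewrite <- minus_sum. apply sum_eq; intros; ring.
  - apply (bigO_0plus_sum (fun m s => a m * (f m s - g m s))).
    intros m Hm. apply bigO_0plus_scal, Hfg, Hm.
Qed.

Lemma bigO_0plus_le (f : R -> R) (m n : nat) :
  (n <= m)%nat -> bigO_0plus f m -> bigO_0plus f n.
Proof.
  intros Hnm [M [e [He Hf]]]. exists (Rabs M), (Rmin e 1).
  split; [apply Rmin_pos; lra|]. intros s Hs.
  pose proof (Rmin_l e 1). pose proof (Rmin_r e 1).
  pose proof (pow_le_pow_le1 s m n ltac:(lra) Hnm).
  pose proof (pow_le s m ltac:(lra)). pose proof (Rle_abs M). pose proof (Rabs_pos M).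
  specialize (Hf s ltac:(lra)). nra.
Qed.

Lemma bigO_0plus_mul_id (f : R -> R) (n : nat) :
  bigO_0plus f n -> bigO_0plus (fun s => s * f s) (S n).
Proof.
  intros [M [e [He Hf]]]. exists M, e. split; auto. intros s Hs.
  rewrite Rabs_mult, Rabs_right by lra. simpl.
  specialize (Hf s Hs). nra.
Qed.

Lemma bigO_0plus_div_id (f : R -> R) (n : nat) :
  bigO_0plus (fun s => s * f s) (S n) -> bigO_0plus f n.
Proof.
  intros [M [e [He Hf]]]. exists M, e. split; auto. intros s Hs.
  specialize (Hf s Hs). rewrite Rabs_mult, Rabs_right in Hf by lra. simpl in Hf.
  apply (Rmult_le_reg_l s); lra.
Qed.

Lemma bigO_0plus_poly (a : nat -> R) (n : nat) :
  bigO_0plus (fun s => sum_f_R0 (fun i => a i * s ^ i) n) 0.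
Proof.
  exists (sum_f_R0 (fun i => Rabs (a i)) n), 1. split; [lra|]. intros s Hs.
  rewrite pow_O, Rmult_1_r. eapply Rle_trans; [apply sum_f_R0_triangle|].
  apply sum_Rle; intros i _. rewrite Rabs_mult.
  pose proof (pow_le_pow_le1 s i 0 ltac:(lra) ltac:(lia)).
  rewrite (Rabs_right (s ^ i)) by (apply Rle_ge, pow_le; lra).
  pose proof (Rabs_pos (a i)). simpl in *. nra.
Qed.

Lemma bigO_0plus_const (a : R) : bigO_0plus (fun _ => a) 1 -> a = 0.
Proof.
  intros [M [e [He Ha]]].
  destruct (Req_dec a 0) as [|Hne]; [assumption|]. exfalso.
  enough (Rabs a <= 0) by (pose proof (Rabs_pos_lt a Hne); lra).
  apply Rle_plus_epsilon; intros eps Heps.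
  set (s := Rmin (e / 2) (eps / (Rabs M + 1))).
  assert (Hs : 0 < s).
  { apply Rmin_pos; [lra | apply Rdiv_lt_0_compat; pose proof (Rabs_pos M); lra]. }
  assert (Hse : s <= e / 2) by apply Rmin_l.
  assert (HsM : s * (Rabs M + 1) <= eps).
  { pose proof (Rabs_pos M).
    apply (Rle_trans _ (eps / (Rabs M + 1) * (Rabs M + 1))); [|right; field; lra].
    apply Rmult_le_compat_r; [lra | apply Rmin_r]. }
  specialize (Ha s ltac:(lra)). simpl in Ha. pose proof (Rle_abs M). nra.
Qed.

Lemma bigO_0plus_poly_coef (a : nat -> R) (n : nat) :
  bigO_0plus (fun s => sum_f_R0 (fun i => a i * s ^ i) n) (S n) ->
  forall i, (i <= n)%nat -> a i = 0.
Proof.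
  revert a. induction n as [|n IH]; intros a Ha i Hi.
  - replace i with 0%nat by lia. apply bigO_0plus_const.
    apply (bigO_0plus_ext _ _ _ (fun s _ => Rmult_1_r (a 0%nat))), Ha.
  - assert (Hsplit : forall s, sum_f_R0 (fun i => a i * s ^ i) (S n) =
                a 0%nat + s * sum_f_R0 (fun i => a (S i) * s ^ i) n).
    { intros s. rewrite decomp_sum by lia. simpl pred. rewrite scal_sum.
      f_equal; [ring | apply sum_eq; intros; simpl; ring]. }
    assert (Ha0 : a 0%nat = 0).
    { apply bigO_0plus_const.
      apply (bigO_0plus_ext (fun s => sum_f_R0 (fun i => a i * s ^ i) (S n) +
               -1 * (s * sum_f_R0 (fun i => a (S i) * s ^ i) n))).
      { intros s _. rewrite Hsplit. ring. }
      apply bigO_0plus_add.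
      - apply (bigO_0plus_le _ (S (S n))); [lia | exact Ha].
      - apply bigO_0plus_scal, bigO_0plus_mul_id, bigO_0plus_poly. }
    destruct i as [|i]; [exact Ha0|].
    apply (IH (fun i => a (S i))); [|lia].
    apply bigO_0plus_div_id.
    apply (bigO_0plus_ext (fun s => sum_f_R0 (fun i => a i * s ^ i) (S n))); [|exact Ha].
    intros s _. rewrite Hsplit, Ha0. ring.
Qed.

Definition bigO_0 (f : R -> R) (n : nat) : Prop :=
  exists M e, 0 < e /\ forall y, Rabs y < e -> Rabs (f y) <= M * Rabs y ^ n.

Lemma bigO_0_ext (f g : R -> R) (n : nat) (d : R) :
  0 < d -> (forall y, Rabs y < d -> f y = g y) -> bigO_0 f n -> bigO_0 g n.
Proof.
  intros Hd Efg [M [e [He Hf]]]. exists M, (Rmin e d). split; [apply Rmin_pos; lra|].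
  intros y Hy. pose proof (Rmin_l e d). pose proof (Rmin_r e d).
  rewrite <- Efg by lra. apply Hf. lra.
Qed.

Lemma bigO_0_comp (f u : R -> R) (n : nat) :
  bigO_0 f n -> bigO_0plus u 1 -> bigO_0plus (fun s => f (u s)) n.
Proof.
  intros [M [e [He Hf]]] [K [e' [He' Hu]]].
  pose proof (Rabs_pos K). pose proof (Rabs_pos M).
  exists (Rabs M * Rabs K ^ n), (Rmin e' (e / (Rabs K + 1))).
  split; [apply Rmin_pos; [lra | apply Rdiv_lt_0_compat; lra]|]. intros s Hs.
  assert (Hs1 : s <= e / (Rabs K + 1)) by (eapply Rle_trans; [apply Rlt_le, Hs | apply Rmin_r]).
  assert (Hs2 : s < e') by (eapply Rlt_le_trans; [apply Hs | apply Rmin_l]).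
  specialize (Hu s ltac:(lra)). simpl in Hu. rewrite Rmult_1_r in Hu.
  assert (HuK : Rabs (u s) <= Rabs K * s) by (pose proof (Rle_abs K); nra).
  assert (Hue : Rabs (u s) < e).
  { apply (Rmult_le_compat_l (Rabs K + 1)) in Hs1; [|lra].
    replace ((Rabs K + 1) * (e / (Rabs K + 1))) with e in Hs1 by (field; lra). nra. }
  eapply Rle_trans; [apply Hf, Hue|].
  rewrite Rmult_assoc, <- Rpow_mult_distr.
  pose proof (pow_le (Rabs (u s)) n (Rabs_pos _)).
  apply Rle_trans with (Rabs M * Rabs (u s) ^ n);
    [apply Rmult_le_compat_r; [lra | apply Rle_abs]|].
  apply Rmult_le_compat_l; [lra|]. apply pow_incr. split; [apply Rabs_pos | exact HuK].
Qed.

Lemma bigO_0plus_of_bigO_0 (f : R -> R) (n : nat) : bigO_0 f n -> bigO_0plus f n.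
Proof.
  intros Hf. apply (bigO_0_comp f (fun s => s) n Hf).
  exists 1, 1. split; [lra|]. intros s Hs. rewrite Rabs_right by lra. lra.
Qed.

Lemma derivable_pt_lim_bigO_0 (f : R -> R) (x l : R) :
  derivable_pt_lim f x l -> bigO_0 (fun y => f (x + y) - f x) 1.
Proof.
  intros Hf. destruct (Hf 1 Rlt_0_1) as [d Hd].
  exists (Rabs l + 1), d. split; [apply cond_pos|]. intros y Hy. rewrite pow_1.
  destruct (Req_dec y 0) as [->|Hy0].
  - rewrite Rplus_0_r, Rminus_diag, Rabs_R0. lra.
  - specialize (Hd y Hy0 Hy).
    replace (f (x + y) - f x) with (y * (((f (x + y) - f x) / y - l) + l)) by (field; auto).
    rewrite Rabs_mult, (Rmult_comm (Rabs l + 1)). apply Rmult_le_compat_l; [apply Rabs_pos|].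
    pose proof (Rabs_triang ((f (x + y) - f x) / y - l) l). lra.
Qed.

Lemma MVT_bound_0 (G G' : R -> R) (y B : R) :
  G 0 = 0 ->
  (forall z, Rabs z <= Rabs y -> derivable_pt_lim G z (G' z) /\ Rabs (G' z) <= B) ->
  Rabs (G y) <= B * Rabs y.
Proof.
  intros G0 HG.
  destruct (Rtotal_order y 0) as [Hlt|[->|Hgt]].
  - destruct (MVT_cor2 G G' y 0 Hlt) as [c [Hc Hcy]].
    { intros c Hc. apply HG. rewrite !Rabs_left1 by lra. lra. }
    destruct (HG c) as [_ Hb]; [rewrite !Rabs_left1 by lra; lra|].
    rewrite G0 in Hc. replace (G y) with (- (G' c * (0 - y))) by lra.
    rewrite Rabs_Ropp, Rabs_mult, Rmult_comm, (Rabs_left1 y), (Rabs_right (0 - y)) by lra.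
    replace (0 - y) with (- y) by ring. pose proof (Rabs_pos (G' c)). nra.
  - rewrite G0, Rabs_R0. lra.
  - destruct (MVT_cor2 G G' 0 y Hgt) as [c [Hc Hcy]].
    { intros c Hc. apply HG. rewrite !Rabs_right by lra. lra. }
    destruct (HG c) as [_ Hb]; [rewrite !Rabs_right by lra; lra|].
    rewrite G0 in Hc. replace (G y) with (G' c * (y - 0)) by lra.
    rewrite Rabs_mult, Rminus_0_r, (Rabs_right y) by lra.
    pose proof (Rabs_pos (G' c)). nra.
Qed.

Definition taylor_poly (F : nat -> R -> R) (x0 : R) (n : nat) (y : R) : R :=
  sum_f_R0 (fun i => F i x0 / INR (fact i) * y ^ i) n.

Lemma derivable_pt_lim_taylor_poly (F : nat -> R -> R) (x0 : R) (n : nat) (y : R) :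
  derivable_pt_lim (taylor_poly F x0 (S n)) y (taylor_poly (fun i => F (S i)) x0 n y).
Proof.
  unfold taylor_poly.
  replace (sum_f_R0 (fun i => F (S i) x0 / INR (fact i) * y ^ i) n) with
    (sum_f_R0 (fun i => INR (S i) * (F (S i) x0 / INR (fact (S i))) * y ^ i) (pred (S n))).
  - apply derivable_pt_lim_fs. lia.
  - apply sum_eq; intros i _. rewrite fact_simpl, mult_INR. field.
    split; [apply INR_fact_neq_0 | apply not_0_INR; lia].
Qed.

Lemma derivable_pt_lim_shift (f : R -> R) (x0 y l : R) :
  derivable_pt_lim f (x0 + y) l -> derivable_pt_lim (fun z => f (x0 + z)) y l.
Proof.
  intros Hf. rewrite <- (Rmult_1_r l).
  apply (derivable_pt_lim_comp (fun z => x0 + z) f); [|exact Hf].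
  rewrite <- (Rplus_0_l 1).
  apply (derivable_pt_lim_plus (fct_cte x0) id);
    [apply derivable_pt_lim_const | apply derivable_pt_lim_id].
Qed.

Lemma iter_derivs_taylor (f : R -> R) (F : nat -> R -> R) (x0 : R) (n : nat) :
  iter_derivs f F x0 -> bigO_0 (fun y => f (x0 + y) - taylor_poly F x0 n y) (S n).
Proof.
  revert f F. induction n as [|n IH]; intros f F [d [Hd HF]].
  - apply (bigO_0_ext (fun y => F 0%nat (x0 + y) - F 0%nat x0) _ _ d Hd).
    + intros y Hy. unfold taylor_poly; simpl.
      rewrite (proj1 (HF (x0 + y) ltac:(replace (x0 + y - x0) with y by ring; exact Hy))).
      field.
    + apply (derivable_pt_lim_bigO_0 _ _ (F 1%nat x0)).
      apply HF. rewrite Rminus_diag, Rabs_R0. exact Hd.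
  - destruct (IH (F 1%nat) (fun i => F (S i))) as [M [e [He HM]]].
    { exists d. split; [exact Hd|]. intros x Hx. split; [reflexivity | intros m; apply HF, Hx]. }
    exists (Rabs M), (Rmin d e). split; [apply Rmin_pos; lra|]. intros y Hy.
    pose proof (Rmin_l d e). pose proof (Rmin_r d e).
    assert (Hball : forall z, Rabs z <= Rabs y -> Rabs (x0 + z - x0) < d).
    { intros z Hz. replace (x0 + z - x0) with z by ring. lra. }
    rewrite <- (proj1 (HF (x0 + y) (Hball y (Rle_refl _)))).
    replace (Rabs M * Rabs y ^ S (S n)) with (Rabs M * Rabs y ^ S n * Rabs y) by (simpl; ring).
    apply (MVT_bound_0 (fun z => F 0%nat (x0 + z) - taylor_poly F x0 (S n) z)
                       (fun z => F 1%nat (x0 + z) - taylor_poly (fun i => F (S i)) x0 n z)).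
    + unfold taylor_poly. rewrite decomp_sum by lia. simpl pred.
      rewrite (sum_eq _ (fun _ => 0)), sum_cte, Rplus_0_r by (intros; simpl; ring).
      simpl. field.
    + intros z Hz. split.
      * apply derivable_pt_lim_minus; [|apply derivable_pt_lim_taylor_poly].
        apply derivable_pt_lim_shift, HF, Hball, Hz.
      * eapply Rle_trans; [apply HM; lra|].
        pose proof (Rabs_pos M). pose proof (pow_le (Rabs z) (S n) (Rabs_pos z)).
        apply Rle_trans with (Rabs M * Rabs z ^ S n);
          [apply Rmult_le_compat_r; [lra | apply Rle_abs]|].
        apply Rmult_le_compat_l; [lra|].
        apply pow_incr. split; [apply Rabs_pos | exact Hz].
Qed.

(* The [i]-th derivative of [s |-> (1 - phi s)^a], written with
   [a (a - 1) ... (a - i + 1) = i! * gbinom a i]. *)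
Definition Rpower_affine_derivs (a phi : R) (i : nat) (s : R) : R :=
  INR (fact i) * gbinom a i * (- phi) ^ i * Rpower (1 - phi * s) (a - INR i).

Lemma derivable_pt_lim_Rpower_affine_derivs (a phi : R) (i : nat) (s : R) :
  0 < 1 - phi * s ->
  derivable_pt_lim (Rpower_affine_derivs a phi i) s (Rpower_affine_derivs a phi (S i) s).
Proof.
  intros Hs.
  set (K := INR (fact i) * gbinom a i * (- phi) ^ i).
  set (b := a - INR i).
  replace (Rpower_affine_derivs a phi (S i) s)
    with (K * (b * Rpower (1 - phi * s) (b - 1) * - phi)).
  - apply (derivable_pt_lim_scal (comp (fun x => Rpower x b) (fun s => 1 - phi * s))).
    apply derivable_pt_lim_comp; [|apply derivable_pt_lim_power, Hs].
    replace (- phi) with (0 - phi * 1) by ring.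
    apply (derivable_pt_lim_minus (fct_cte 1) (mult_real_fct phi id));
      [apply derivable_pt_lim_const | apply derivable_pt_lim_scal, derivable_pt_lim_id].
  - unfold Rpower_affine_derivs, K, b. cbn [gbinom pow].
    rewrite fact_simpl, mult_INR.
    replace (a - INR (S i)) with (a - INR i - 1) by (rewrite S_INR; ring).
    field. apply not_0_INR; lia.
Qed.

Lemma iter_derivs_Rpower_affine (a phi : R) :
  iter_derivs (fun s => Rpower (1 - phi * s) a) (Rpower_affine_derivs a phi) 0.
Proof.
  exists (/ (Rabs phi + 1)). split; [apply Rinv_0_lt_compat; pose proof (Rabs_pos phi); lra|].
  intros s Hs. rewrite Rminus_0_r in Hs.
  assert (Hpos : 0 < 1 - phi * s).
  { pose proof (Rabs_pos phi). pose proof (Rle_abs (phi * s)).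
    assert (Rabs s * (Rabs phi + 1) < 1).
    { apply (Rmult_lt_compat_r (Rabs phi + 1)) in Hs; [|lra].
      rewrite Rinv_l in Hs by lra. exact Hs. }
    rewrite Rabs_mult in *. pose proof (Rabs_pos s). nra. }
  split.
  - unfold Rpower_affine_derivs. simpl. rewrite Rminus_0_r. ring.
  - intros m. apply derivable_pt_lim_Rpower_affine_derivs, Hpos.
Qed.

Lemma binomial_series_bigO_0 (a phi : R) (n : nat) :
  bigO_0 (fun s => Rpower (1 - phi * s) a -
                   sum_f_R0 (fun i => gbinom a i * (- phi) ^ i * s ^ i) n) (S n).
Proof.
  apply (bigO_0_ext (fun s => Rpower (1 - phi * (0 + s)) a -
                              taylor_poly (Rpower_affine_derivs a phi) 0 n s) _ _ 1 Rlt_0_1).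
  - intros s _. rewrite Rplus_0_l. f_equal. apply sum_eq; intros i _.
    unfold Rpower_affine_derivs, Rpower.
    rewrite Rmult_0_r, Rminus_0_r, ln_1, Rmult_0_r, exp_0.
    field. apply INR_fact_neq_0.
  - apply (iter_derivs_taylor (fun s => Rpower (1 - phi * s) a)), iter_derivs_Rpower_affine.
Qed.

Lemma Un_cv_dist_le (u : nat -> R) (l a b : R) (n0 : nat) :
  Un_cv u l -> (forall N, (n0 <= N)%nat -> Rabs (u N - a) <= b) -> Rabs (l - a) <= b.
Proof.
  intros Hu Hb. apply Rle_plus_epsilon; intros eps Heps.
  destruct (Hu eps Heps) as [N0 HN0].
  set (N := Nat.max n0 N0).
  specialize (HN0 N (Nat.le_max_r _ _)). specialize (Hb N (Nat.le_max_l _ _)).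
  unfold Rdist in HN0. rewrite Rabs_minus_sym in HN0.
  replace (l - a) with ((l - u N) + (u N - a)) by ring.
  pose proof (Rabs_triang (l - u N) (u N - a)). lra.
Qed.

Lemma pmf_series_tail (p : nat -> R) (s L : R) (n : nat) :
  is_pmf p -> 0 <= s <= 1 -> infinite_sum (fun k => p k * s ^ k) L ->
  Rabs (L - sum_f_R0 (fun k => p k * s ^ k) n) <= s ^ S n.
Proof.
  intros [Hp0 Hp1] Hs HL.
  assert (Htail : forall m,
    0 <= sum_f_R0 (fun k => p k * s ^ k) (n + m) - sum_f_R0 (fun k => p k * s ^ k) n
      <= s ^ S n * (sum_f_R0 p (n + m) - sum_f_R0 p n)).
  { induction m as [|m IH].
    - rewrite Nat.add_0_r. lra.
    - rewrite Nat.add_succ_r, !tech5.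
      pose proof (pow_le_pow_le1 s (S (n + m)) (S n) Hs ltac:(lia)).
      pose proof (Hp0 (S (n + m))). pose proof (pow_le s (S (n + m)) ltac:(lra)). nra. }
  apply (Un_cv_dist_le _ _ _ _ n HL). intros N HN.
  replace N with (n + (N - n))%nat by lia.
  destruct (Htail (N - n)%nat) as [Hlo Hhi].
  pose proof (sum_incr p (n + (N - n)) 1 Hp1 Hp0).
  pose proof (cond_pos_sum p n Hp0). pose proof (pow_le s (S n) ltac:(lra)).
  rewrite Rabs_right by lra. nra.
Qed.

Lemma Rpower_sub_1_pow (X gamma beta : R) (m : nat) : 0 < X ->
  (beta * (Rpower X gamma - 1)) ^ m =
  (- beta) ^ m * sum_f_R0 (fun j => (-1) ^ j * C m j * Rpower X (gamma * INR j)) m.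
Proof.
  intros HX. rewrite Rpow_mult_distr.
  replace (Rpower X gamma - 1) with (Rpower X gamma + -1) by ring.
  rewrite binomial, !scal_sum. apply sum_eq; intros j Hj.
  rewrite <- Rpower_mult, Rpower_pow by apply exp_pos.
  replace (- beta) with (-1 * beta) by ring.
  rewrite Rpow_mult_distr.
  replace ((-1) ^ m) with ((-1) ^ (m - j) * (-1) ^ j)
    by (rewrite <- pow_add; f_equal; lia).
  replace ((-1) ^ j * C m j * Rpower X gamma ^ j *
           ((-1) ^ (m - j) * (-1) ^ j * beta ^ m))
    with (C m j * Rpower X gamma ^ j * (-1) ^ (m - j) * beta ^ m * ((-1) ^ j * (-1) ^ j))
    by ring.
  rewrite <- Rpow_mult_distr. replace (-1 * -1) with 1 by ring. rewrite pow1. ring.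
Qed.

Lemma Ccoef_expansion (A : nat -> R) (gamma phi s : R) (k : nat) :
  sum_f_R0 (fun m => A m * sum_f_R0 (fun j => (-1) ^ j * C m j *
      sum_f_R0 (fun i => gbinom (gamma * INR j) i * (- phi) ^ i * s ^ i) k) m) k =
  sum_f_R0 (fun i => (- phi) ^ i * sum_f_R0 (fun m => A m * Ccoef gamma m i) k * s ^ i) k.
Proof.
  rewrite (sum_eq _ (fun m => A m * sum_f_R0 (fun i =>
      sum_f_R0 (fun j => (-1) ^ j * C m j * gbinom (gamma * INR j) i) m *
      ((- phi) ^ i * s ^ i)) k)).
  - rewrite sum_f_R0_mul_sum. apply sum_eq; intros i _.
    transitivity ((- phi) ^ i * s ^ i * sum_f_R0 (fun m => A m * Ccoef gamma m i) k); [|ring].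
    rewrite scal_sum. apply sum_eq; intros m _. unfold Ccoef. ring.
  - intros m _. f_equal. rewrite sum_f_R0_mul_sum. apply sum_eq; intros i _.
    symmetry. rewrite Rmult_comm, scal_sum. apply sum_eq; intros j _. ring.
Qed.

Lemma composite_expansion_bigO_0plus (gamma beta phi : R) (hc : nat -> R) (k : nat) :
  phi <= 1 ->
  bigO_0plus (fun s =>
    sum_f_R0 (fun m => hc m / INR (fact m) * (beta * (Rpower (1 - phi * s) gamma - 1)) ^ m) k -
    sum_f_R0 (fun i => (- phi) ^ i *
      sum_f_R0 (fun m => (- beta) ^ m / INR (fact m) * hc m * Ccoef gamma m i) k * s ^ i) k)
    (S k).
Proof.
  intros Hphi.
  set (A := fun m => (- beta) ^ m / INR (fact m) * hc m).
  set (c := fun m j => (-1) ^ j * C m j).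
  set (B := fun j s => sum_f_R0 (fun i => gbinom (gamma * INR j) i * (- phi) ^ i * s ^ i) k).
  assert (HX : forall m, (m <= k)%nat -> bigO_0plus (fun s =>
      sum_f_R0 (fun j => c m j * Rpower (1 - phi * s) (gamma * INR j)) m -
      sum_f_R0 (fun j => c m j * B j s) m) (S k)).
  { intros m _. apply (bigO_0plus_lincomb (c m) (fun j s => Rpower (1 - phi * s) (gamma * INR j))).
    intros j _. apply bigO_0plus_of_bigO_0, binomial_series_bigO_0. }
  eapply bigO_0plus_ext; [|exact (bigO_0plus_lincomb A _ _ _ _ HX)].
  intros s Hs. cbv beta. f_equal.
  - apply sum_eq; intros m _.
    rewrite (Rpower_sub_1_pow (1 - phi * s)) by nra. unfold A, c. field. apply INR_fact_neq_0.
  - apply Ccoef_expansion.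
Qed.

Lemma taylor_comp_Rpower_affine (h : R -> R) (hd : nat -> R -> R) (c beta gamma phi : R)
    (k : nat) :
  iter_derivs h hd c ->
  bigO_0plus (fun s => h (c + beta * (Rpower (1 - phi * s) gamma - 1)) -
    sum_f_R0 (fun m => hd m c / INR (fact m) * (beta * (Rpower (1 - phi * s) gamma - 1)) ^ m) k)
    (S k).
Proof.
  intros Hhd. apply (bigO_0_comp (fun y => h (c + y) - taylor_poly hd c k y)).
  - apply iter_derivs_taylor, Hhd.
  - apply bigO_0plus_scal.
    apply (bigO_0plus_ext (fun s => Rpower (1 - phi * s) gamma -
             sum_f_R0 (fun i => gbinom gamma i * (- phi) ^ i * s ^ i) 0)).
    + intros s _. simpl. ring.
    + apply bigO_0plus_of_bigO_0, binomial_series_bigO_0.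
Qed.

Theorem mainTheorem1
  (gamma alpha beta phi : R) (p : nat -> R) (h : R -> R) (hd : nat -> R -> R)
  (Hphi : 0 <= phi <= 1)
  (Hp : is_pmf p)
  (Hh : analytic_at h (alpha + beta))
  (Hhd : iter_derivs h hd (alpha + beta))
  (Hpgf : forall s : R, 0 <= s <= 1 -> 0 < 1 - phi * s ->
     infinite_sum (fun k => p k * s ^ k)
       (h (alpha + beta * Rpower (1 - phi * s) gamma))) :
  forall k : nat,
    p k = (- phi) ^ k *
      sum_f_R0 (fun m => (- beta) ^ m / INR (fact m) * hd m (alpha + beta)
                          * Ccoef gamma m k) k.
Proof.
  intros k.
  set (c := alpha + beta).
  set (g := fun s => h (alpha + beta * Rpower (1 - phi * s) gamma)).
  set (e := fun i => (- phi) ^ i *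
    sum_f_R0 (fun m => (- beta) ^ m / INR (fact m) * hd m c * Ccoef gamma m i) k).
  assert (Hpartial : bigO_0plus (fun s => g s - sum_f_R0 (fun i => p i * s ^ i) k) (S k)).
  { exists 1, 1. split; [lra|]. intros s Hs. rewrite Rmult_1_l.
    apply pmf_series_tail; [exact Hp | lra | apply Hpgf; nra]. }
  pose proof (taylor_comp_Rpower_affine h hd c beta gamma phi k Hhd) as Htaylor.
  pose proof (composite_expansion_bigO_0plus gamma beta phi (fun m => hd m c) k
                (proj2 Hphi)) as Hcomposite.
  assert (Hcoef : bigO_0plus (fun s => sum_f_R0 (fun i => (p i - e i) * s ^ i) k) (S k)).
  { eapply bigO_0plus_ext;
      [|exact (bigO_0plus_add _ _ _ (bigO_0plus_add _ _ _ Htaylor Hcomposite)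
                                    (bigO_0plus_scal (-1) _ _ Hpartial))].
    intros s _. cbv beta.
    rewrite (sum_eq (fun i => (p i - e i) * s ^ i) (fun i => p i * s ^ i - e i * s ^ i)),
      minus_sum by (intros; ring).
    replace (c + beta * (Rpower (1 - phi * s) gamma - 1))
      with (alpha + beta * Rpower (1 - phi * s) gamma) by (unfold c; ring).
    fold (g s). unfold e. ring. }
  pose proof (bigO_0plus_poly_coef _ k Hcoef k (Nat.le_refl k)). unfold e, c in *. lra.
Qed.
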